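(* Let $\rho_{\mathrm W}=\frac{1-\eta}{4}\mathbb{1}\otimes\mathbb{1}+\eta|\psi^-\rangle\langle\psi^-|$ be the two-qubit Werner state, where $|\psi^-\rangle=\frac{1}{\sqrt2}(|01\rangle-|10\rangle)$ and $\eta\in[0,1]$. Let $\pm\vec n_1,\dots,\pm\vec n_6$ be the 12 vertices of a regular icosahedron inscribed in the unit sphere of $\mathbb{R}^3$. Suppose the assemblage generated on Bob's side by Alice's six projective measurements of the observables $\vec n_k\cdot\vec\sigma$, $k=1,\dots,6$, admits a local hidden state model. Then $$\eta\le \frac{3+\sqrt5}{3(1+\sqrt5)}\approx 0.5393.$$
   Context: $\vec\sigma=(\sigma_x,\sigma_y,\sigma_z)$ denotes the vector of Pauli matrices. A local hidden state model for an assemblage $\{\sigma_{i|X}\}$ means that there exist: - a probability distribution $\{\kappa_\lambda\}$, - response distributions $p^{(\lambda)}_i(x)$, - qubit density matrices $\rho^{(\lambda)}$, such that $\sigma_{i|X}=\sum_\lambda\kappa_\lambda p^{(\lambda)}_i(x)\rho^{(\lambda)}$ for every measurement $X$ in the given set and every outcome $i$. The assemblage is defined by $\sigma_{i|X}=\mathrm{Tr}_A[(\Pi^X_i\otimes\mathbb{1})\rho_{\mathrm W}]$, where $\Pi^X_i$ are the eigenprojectors of the observable $X$. *)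

(* Complex numbers: an arbitrary numClosedFieldType C
   (e.g. the complex numbers); "real" means an element of Num.real. *)
From HB Require Import structures.
From mathcomp Require Import all_boot all_order all_algebra.
Set Implicit Arguments. Unset Strict Implicit. Unset Printing Implicit Defensive.
Import Order.TTheory GRing.Theory Num.Theory.
Local Open Scope ring_scope.

Section Qubits.
Variable C : numClosedFieldType.

Definition adj {m n} (A : 'M[C]_(m, n)) : 'M[C]_(n, m) :=
  \matrix_(i, j) (A j i)^*.

Definition sigx : 'M[C]_2 := \matrix_(i, j) (if i != j then 1 else 0).
Definition sigy : 'M[C]_2 :=
  \matrix_(i, j) (if (i == 0 :> nat) && (j == 1 :> nat) then - 'i
                  else if (i == 1 :> nat) && (j == 0 :> nat) then 'i else 0).
Definition sigz : 'M[C]_2 :=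
  \matrix_(i, j) (if i == j then (if i == 0 :> nat then 1 else -1) else 0).

(* n . sigma for a vector n in R^3 (stored as a column of C with real entries) *)
Definition ndotsig (n : 'cV[C]_3) : 'M[C]_2 :=
  n 0 0 *: sigx + n 1 0 *: sigy + n 2%:R 0 *: sigz.

(* eigenprojectors of n.sigma for a real unit vector n:
   outcome i = 0 is eigenvalue +1, outcome i = 1 is eigenvalue -1 *)
Definition proj_n (n : 'cV[C]_3) (i : 'I_2) : 'M[C]_2 :=
  2^-1 *: (1%:M + (-1) ^+ i *: ndotsig n).

(* Two-qubit space C^2 (x) C^2 = C^4, basis |ab> has index 2a+b. *)
Definition idx (a b : 'I_2) : 'I_4 := inord (2 * a + b).
Definition fst_ (i : 'I_4) : 'I_2 := inord (i %/ 2).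
Definition snd_ (i : 'I_4) : 'I_2 := inord (i %% 2).

Definition kron (A B : 'M[C]_2) : 'M[C]_4 :=
  \matrix_(i, j) (A (fst_ i) (fst_ j) * B (snd_ i) (snd_ j)).

Definition ptraceA (M : 'M[C]_4) : 'M[C]_2 :=
  \matrix_(i, j) \sum_(a < 2) M (idx a i) (idx a j).

Definition psi_minus : 'cV[C]_4 :=
  \col_i (if i == 1 :> nat then (sqrtC 2)^-1
          else if i == 2 :> nat then - (sqrtC 2)^-1 else 0).

Definition werner (eta : C) : 'M[C]_4 :=
  ((1 - eta) / 4%:R) *: 1%:M + eta *: (psi_minus *m adj psi_minus).

Definition assemblage (eta : C) (n : 'I_6 -> 'cV[C]_3) (k : 'I_6) (i : 'I_2)
  : 'M[C]_2 := ptraceA (kron (proj_n (n k) i) 1%:M *m werner eta).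

Definition is_density (r : 'M[C]_2) : Prop :=
  adj r = r /\ (forall x : 'cV[C]_2, 0 <= (adj x *m r *m x) 0 0) /\ \tr r = 1.

(* local hidden state model for an assemblage with measurements indexed by
   'I_6 and outcomes by 'I_2; hidden variable lambda ranges over 'I_N. *)
Definition has_LHS (sig : 'I_6 -> 'I_2 -> 'M[C]_2) : Prop :=
  exists (N : nat) (kappa : 'I_N -> C) (p : 'I_N -> 'I_6 -> 'I_2 -> C)
         (rho : 'I_N -> 'M[C]_2),
    (forall l, 0 <= kappa l) /\ \sum_l kappa l = 1 /\
    (forall l x i, 0 <= p l x i) /\ (forall l x, \sum_i p l x i = 1) /\
    (forall l, is_density (rho l)) /\
    (forall x i, sig x i = \sum_l (kappa l * p l x i) *: rho l).

(* standard regular icosahedron: vertices (0,+-1,+-phi), (+-1,+-phi,0),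
   (+-phi,0,+-1), scaled to the unit sphere; std_vert j (j < 6) together with
   their negatives give all 12 vertices. *)
Definition phi : C := (1 + sqrtC 5%:R) / 2%:R.
Definition vec3 (a b c : C) : 'cV[C]_3 :=
  \col_i (if i == 0 :> nat then a else if i == 1 :> nat then b else c).
Definition std_vert (j : 'I_6) : 'cV[C]_3 :=
  (sqrtC (1 + phi ^+ 2))^-1 *:
  (match val j with
   | 0 => vec3 0 1 phi
   | 1 => vec3 0 1 (- phi)
   | 2 => vec3 1 phi 0
   | 3 => vec3 1 (- phi) 0
   | 4 => vec3 phi 0 1
   | _ => vec3 (- phi) 0 1
   end).

Definition real_orthogonal (Q : 'M[C]_3) : Prop :=
  (forall i j, Q i j \is Num.real) /\ Q^T *m Q = 1%:M.

(* the 12 points +-n_1, ..., +-n_6 are exactly the vertices of a regular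
   icosahedron inscribed in the unit sphere (image of the standard one under
   an orthogonal map) *)
Definition icosahedron_axes (n : 'I_6 -> 'cV[C]_3) : Prop :=
  exists Q : 'M[C]_3, real_orthogonal Q /\
    forall x : 'cV[C]_3,
      (exists (k : 'I_6) (s : bool), x = (-1) ^+ s *: n k) <->
      (exists (j : 'I_6) (s : bool), x = (-1) ^+ s *: (Q *m std_vert j)).

End Qubits.

From HB Require Import structures.
From mathcomp Require Import all_boot all_order all_algebra.
From mathcomp Require Import ring lra.
Set Implicit Arguments. Unset Strict Implicit. Unset Printing Implicit Defensive.
Import Order.TTheory GRing.Theory Num.Theory.
Local Open Scope ring_scope.

(* For the Werner state, sigma_{0|k} - sigma_{1|k} = -(eta/2) n_k.sigma, so the
   steering functional S = sum_k Tr[(n_k.sigma)(sigma_{0|k} - sigma_{1|k})]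
   equals -6 eta.  In a local hidden state model each hidden state rho_l has a
   Bloch vector r_l with |r_l| <= 1 and Tr[(n.sigma) rho_l] = n.r_l, while the
   response differences p(0|k) - p(1|k) lie in [-1, 1]; hence
   |S| <= max_{|r| <= 1} sum_k |n_k.r|.  For the icosahedron this maximum is
   2 phi (phi the golden ratio): sum_k |n_k.r| = (sum_k e_k n_k).r for suitable
   signs e_k, and every signed sum of the six axes has length at most 2 phi.
   So 6 eta <= 2 phi, i.e. eta <= phi/3 = (3 + sqrt 5)/(3 (1 + sqrt 5)). *)

Definition dot3 {R : pzRingType} (x y z a b c : R) := x * a + y * b + z * c.

Section RealSubfield.
Variable C : numClosedFieldType.

(* The real elements of [C], as a realFieldType: this lets [nra] work on them. *)
Record real_sub := RealSub { rval : C; rvalP : rval \is Num.real }.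
HB.instance Definition _ := [isSub for rval].
HB.instance Definition _ := [Choice of real_sub by <:].
HB.instance Definition _ := [SubChoice_isSubComUnitRing of real_sub by <:].
HB.instance Definition _ :=
  [SubComUnitRing_isSubIntegralDomain of real_sub by <:].
HB.instance Definition _ := [SubIntegralDomain_isSubField of real_sub by <:].

Let le_real_sub (x y : real_sub) := rval x <= rval y.
Let lt_real_sub (x y : real_sub) := rval x < rval y.
Let norm_real_sub (x : real_sub) : real_sub := RealSub (normr_real (rval x)).

Fact real_sub_addr_ge0 x y :
  le_real_sub 0 x -> le_real_sub 0 y -> le_real_sub 0 (x + y).
Proof. exact: addr_ge0. Qed.
Fact real_sub_mulr_ge0 x y :
  le_real_sub 0 x -> le_real_sub 0 y -> le_real_sub 0 (x * y).
Proof. exact: mulr_ge0. Qed.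
Fact real_sub_le_anti x : le_real_sub 0 x -> le_real_sub x 0 -> x = 0.
Proof.
rewrite /le_real_sub => x0 x0'; apply: val_inj; apply/eqP.
by rewrite eq_le x0 x0'.
Qed.
Fact real_sub_subr_ge0 x y : le_real_sub 0 (y - x) = le_real_sub x y.
Proof. exact: subr_ge0. Qed.
Fact real_sub_le_total x : le_real_sub 0 x || le_real_sub x 0.
Proof. by have := rvalP x; rewrite realE. Qed.
Fact real_sub_normN x : norm_real_sub (- x) = norm_real_sub x.
Proof. by apply: val_inj; exact: (normrN (rval x)). Qed.
Fact real_sub_ger0_norm x : le_real_sub 0 x -> norm_real_sub x = x.
Proof. by rewrite /le_real_sub => x0; apply: val_inj; rewrite /= ger0_norm. Qed.
Fact real_sub_lt_def x y : lt_real_sub x y = (y != x) && le_real_sub x y.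
Proof. exact: lt_def. Qed.

HB.instance Definition _ := Num.IntegralDomain_isLeReal.Build real_sub
  real_sub_addr_ge0 real_sub_mulr_ge0 real_sub_le_anti real_sub_subr_ge0
  real_sub_le_total real_sub_normN real_sub_ger0_norm real_sub_lt_def.

End RealSubfield.

Section SignedSums.
Variable R : realFieldType.

Lemma dot3_le (x y z a b c lam : R) : 0 < lam ->
  a ^+ 2 + b ^+ 2 + c ^+ 2 <= 1 -> x ^+ 2 + y ^+ 2 + z ^+ 2 <= lam ^+ 2 ->
  dot3 x y z a b c <= lam.
Proof.
move=> lam0 r1 v_le; rewrite /dot3 -(ler_pM2l (_ : 0 < 2 * lam)) ?mulr_gt0 //.
have := sqr_ge0 (x - lam * a); have := sqr_ge0 (y - lam * b).
have := sqr_ge0 (z - lam * c); nra.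
Qed.

(* [p] is the golden ratio and [K] the common length of the unnormalised
   vertices (0, 1, +-p), (1, +-p, 0), (+-p, 0, 1). *)
Lemma icosahedron_abs_dot_sum_le (a b c p K : R) :
  p * p = p + 1 -> 0 < p -> K * K = p + 2 -> 0 <= K ->
  a ^+ 2 + b ^+ 2 + c ^+ 2 <= 1 ->
  `|dot3 0 1 p a b c| + `|dot3 0 1 (- p) a b c| + `|dot3 1 p 0 a b c|
  + `|dot3 1 (- p) 0 a b c| + `|dot3 p 0 1 a b c| + `|dot3 (- p) 0 1 a b c|
  <= 2 * p * K.
Proof.
move=> pp p0 KK K0 r1.
have lam2 : (2 * p * K) ^+ 2 = 16 * p + 12.
  have -> : (2 * p * K) ^+ 2 = 4 * (p * p) * (K * K) by ring.
  by rewrite KK pp; nra.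
have lam0 : 0 < 2 * p * K.
  rewrite !pmulr_rgt0 // lt_def K0 andbT.
  by apply/eqP => K00; move: KK; rewrite K00; nra.
rewrite !(normrEsign (dot3 _ _ _ _ _ _)).
set s0 := (_ < 0); set s1 := (_ < 0); set s2 := (_ < 0).
set s3 := (_ < 0); set s4 := (_ < 0); set s5 := (_ < 0).
move: s0 s1 s2 s3 s4 s5 => s0 s1 s2 s3 s4 s5.
set e0 := (-1) ^+ s0; set e1 := (-1) ^+ s1; set e2 := (-1) ^+ s2.
set e3 := (-1) ^+ s3; set e4 := (-1) ^+ s4; set e5 := (-1) ^+ s5.
rewrite (_ : _ + _ = dot3 (e2 + e3 + e4 * p - e5 * p) (e0 + e1 + e2 * p - e3 * p)
   (e0 * p - e1 * p + e4 + e5) a b c); last by rewrite /dot3; ring.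
apply: dot3_le => //; rewrite lam2 {}/e0 {}/e1 {}/e2 {}/e3 {}/e4 {}/e5.
by case: s0; case: s1; case: s2; case: s3; case: s4; case: s5;
  rewrite ?expr0 ?expr1; nra.
Qed.

End SignedSums.

Section TwoQubits.
Variable C : numClosedFieldType.

Lemma ord2P (i : 'I_2) : i = ord0 \/ i = ord_max.
Proof. by case: i => [[|[|//]]] hi; [left|right]; apply: val_inj. Qed.

Lemma big_ord2 (F : 'I_2 -> C) : \sum_(i < 2) F i = F ord0 + F ord_max.
Proof. by rewrite big_ord_recr big_ord1; congr (F _ + F _); apply: val_inj. Qed.

Lemma val_idx (a b : 'I_2) : val (idx a b) = (2 * a + b)%N.
Proof.
by rewrite /idx /= inordK //; case: (ord2P a) => ->; case: (ord2P b) => ->.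
Qed.

Lemma big_ord4 (F : 'I_4 -> C) : \sum_(c < 4) F c =
  F (idx ord0 ord0) + F (idx ord0 ord_max) + F (idx ord_max ord0)
  + F (idx ord_max ord_max).
Proof.
rewrite !big_ord_recr big_ord0 /= add0r.
by congr (_ + _ + _ + _); congr F; apply: val_inj; rewrite val_idx.
Qed.

Lemma fst_idx a b : fst_ (idx a b) = a.
Proof.
apply: val_inj; rewrite /fst_ /= val_idx inordK;
  by case: (ord2P a) => ->; case: (ord2P b) => ->.
Qed.

Lemma snd_idx a b : snd_ (idx a b) = b.
Proof.
apply: val_inj; rewrite /snd_ /= val_idx inordK;
  by case: (ord2P a) => ->; case: (ord2P b) => ->.
Qed.

Lemma idx_eq a b c d : (idx a b == idx c d) = (a == c) && (b == d).
Proof.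
rewrite -val_eqE !val_idx.
by case: (ord2P a) => ->; case: (ord2P b) => ->; case: (ord2P c) => ->;
  case: (ord2P d) => ->.
Qed.

Lemma werner_idx (eta : C) a b c d : werner eta (idx a b) (idx c d) =
  (1 - eta) / 4%:R * ((a == c) && (b == d))%:R
  + eta * (if (a != b) && (c != d) then (if a == c then 2^-1 else - 2^-1) else 0).
Proof.
have s2 : (sqrtC (2 : C))^-1 * (sqrtC 2)^-1 = 2^-1.
  by rewrite -invfM -expr2 sqrtCK.
have r2 : (sqrtC (2 : C))^-1 \is Num.real.
  by apply: ger0_real; rewrite invr_ge0 sqrtC_ge0 ler0n.
have c2 : ((sqrtC (2 : C))^-1)^* = (sqrtC 2)^-1 by exact: conj_Creal.
have cN2 : (- (sqrtC (2 : C))^-1)^* = - (sqrtC 2)^-1.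
  by apply: conj_Creal; rewrite rpredN.
rewrite /werner !mxE idx_eq big_ord1 /adj !mxE !val_idx.
by case: (ord2P a) => ->; case: (ord2P b) => ->; case: (ord2P c) => ->;
  case: (ord2P d) => -> /=;
  rewrite ?cN2 ?c2 ?rmorph0 ?mulr0 ?mul0r ?mulrN ?mulNr ?opprK ?s2 ?addr0 ?add0r
    ?mulr1 //; ring.
Qed.

Lemma ptraceA_werner (eta : C) (P : 'M[C]_2) :
  ptraceA (kron P 1%:M *m werner eta) =
  ((1 - eta) / 4%:R * \tr P) *: 1%:M + (eta / 2) *: (\tr P *: 1%:M - P).
Proof.
have wE := werner_idx eta; move: (werner eta) wE => W wE.
apply/matrixP => i j; rewrite /ptraceA /kron !mxE big_ord2 /mxtrace big_ord2.
rewrite !mxE !big_ord4 !mxE !fst_idx !snd_idx !wE.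
by case: (ord2P i) => ->; case: (ord2P j) => -> /=; ring.
Qed.

Lemma ndotsig_sqr (m : 'cV[C]_3) :
  ndotsig m *m ndotsig m = (m 0 0 ^+ 2 + m 1 0 ^+ 2 + m 2%:R 0 ^+ 2) *: 1%:M.
Proof.
apply/matrixP => i j; rewrite !mxE big_ord2 !mxE /=.
have := sqrCi C; move: ('i) => I I2.
by case: (ord2P i) => ->; case: (ord2P j) => -> /=; ring: I2.
Qed.

Lemma assemblage_werner_diff eta (n : 'I_6 -> 'cV[C]_3) k :
  assemblage eta n k ord0 - assemblage eta n k ord_max
  = - (eta / 2) *: ndotsig (n k).
Proof.
rewrite /assemblage !ptraceA_werner.
apply/matrixP => i j; rewrite !mxE /mxtrace !big_ord2 !mxE /= expr0 expr1.
by case: (ord2P i) => ->; case: (ord2P j) => -> /=; field.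
Qed.

End TwoQubits.

Section BlochVectors.
Variable C : numClosedFieldType.

Definition dotv (m r : 'cV[C]_3) : C := (m^T *m r) 0 0.

Lemma big_ord3 (F : 'I_3 -> C) : \sum_(i < 3) F i = F 0 + F 1 + F 2%:R.
Proof.
rewrite !big_ord_recr big_ord0 /= add0r.
by congr (_ + _ + _); congr F; apply: val_inj.
Qed.

Lemma dotvE m r :
  dotv m r = m 0 0 * r 0 0 + m 1 0 * r 1 0 + m 2%:R 0 * r 2%:R 0.
Proof. by rewrite /dotv mxE big_ord3 !mxE. Qed.

Lemma dotv_vec3 a b c r :
  dotv (vec3 a b c) r = dot3 a b c (r 0 0) (r 1 0) (r 2%:R 0).
Proof. by rewrite dotvE !mxE. Qed.

Lemma dotvC m r : dotv m r = dotv r m.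
Proof. by rewrite !dotvE; ring. Qed.

Lemma dotvZl x m r : dotv (x *: m) r = x * dotv m r.
Proof. by rewrite !dotvE !mxE; ring. Qed.

Lemma dotvZr x m r : dotv m (x *: r) = x * dotv m r.
Proof. by rewrite !dotvE !mxE; ring. Qed.

Lemma dotv_mulmxl (Q : 'M[C]_3) v r : dotv (Q *m v) r = dotv v (Q^T *m r).
Proof. by rewrite /dotv trmx_mul mulmxA. Qed.

Lemma dotv_orthogonal (Q : 'M[C]_3) v w : Q^T *m Q = 1%:M ->
  dotv (Q *m v) (Q *m w) = dotv v w.
Proof. by move=> QQ; rewrite dotv_mulmxl mulmxA QQ mul1mx. Qed.

Lemma vec3_real (a b c : C) : a \is Num.real -> b \is Num.real ->
  c \is Num.real -> vec3 a b c \is a mxOver Num.real.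
Proof. by move=> ar br cr; apply/mxOverP => i j; rewrite mxE; do 2?case: ifP. Qed.

(* The Bloch vector (2 Re q, 2 Im q, a - b) of rho = [[a, q^*], [q, b]]. *)
Lemma density_bloch (rho : 'M[C]_2) : is_density rho ->
  exists r : 'cV[C]_3, [/\ r \is a mxOver Num.real, dotv r r <= 1 &
    forall m, \tr (ndotsig m *m rho) = dotv m r].
Proof.
case=> herm [psd tr1].
have rhoE i j : rho i j = (rho j i)^*.
  by move/matrixP/(_ i j): herm; rewrite mxE => <-.
set a := rho ord0 ord0; set b := rho ord_max ord_max; set q := rho ord_max ord0.
have rho01 : rho ord0 ord_max = q^* by rewrite rhoE.
have ar : a \is Num.real by apply/CrealP; rewrite /a -rhoE.
have br : b \is Num.real by apply/CrealP; rewrite /b -rhoE.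
have ab1 : a + b = 1 by rewrite -tr1 /mxtrace big_ord2.
(* Positivity on the two columns of the adjugate sums to (a + b) det rho. *)
have det_ge0 : 0 <= a * b - q * q^*.
  pose x1 : 'cV[C]_2 := \col_i (if i == ord0 then b else - q).
  pose x2 : 'cV[C]_2 := \col_i (if i == ord0 then - q^* else a).
  have := psd x1; have := psd x2.
  rewrite /adj !mxE !big_ord2 !mxE !big_ord2 !mxE /= -/a -/b -/q rho01.
  rewrite !rmorphN /= conjCK (conj_Creal ar) (conj_Creal br) => P2 P1.
  have -> : a * b - q * q^* = (a + b) * (a * b - q * q^*) by rewrite ab1 mul1r.
  apply: le_trans (addr_ge0 P1 P2) _.
  by rewrite le_eqVlt; apply/orP; left; apply/eqP; ring.
exists (vec3 (q^* + q) ('i * (q^* - q)) (a - b)); split.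
- apply: vec3_real; last exact: rpredB.
    by apply/CrealP; rewrite rmorphD /= conjCK addrC.
  by apply/CrealP; rewrite rmorphM rmorphB /= conjCK conjCi; ring.
- have := sqrCi C; move: ('i) => I I2.
  rewrite dotv_vec3 !mxE /= /dot3.
  have -> : (q^* + q) * (q^* + q) + I * (q^* - q) * (I * (q^* - q))
      + (a - b) * (a - b) = (a + b) ^+ 2 - 4%:R * (a * b - q * q^*) by ring: I2.
  by rewrite ab1 expr1n lerBlDr lerDl mulr_ge0 ?ler0n.
- move=> m; rewrite dotvC dotv_vec3 /mxtrace big_ord2 !mxE !big_ord2 !mxE /=.
  by rewrite -/a -/b -/q rho01 /dot3; ring.
Qed.

End BlochVectors.

Section Icosahedron.
Variable C : numClosedFieldType.
Local Notation phi := (phi C).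

Lemma phi_gt0 : 0 < phi.
Proof.
rewrite /phi divr_gt0 ?ltr0n // (lt_le_trans ltr01) // lerDl.
by rewrite sqrtC_ge0 ler0n.
Qed.

Lemma phi_real : phi \is Num.real.
Proof. exact/ger0_real/ltW/phi_gt0. Qed.

Lemma phi_sqr : phi * phi = phi + 1.
Proof. by have := sqrtCK (5%:R : C); rewrite /phi => s5; field: s5. Qed.

Definition ico_len : C := sqrtC (1 + phi ^+ 2).

Lemma ico_len_sqr : ico_len * ico_len = phi + 2%:R.
Proof. by rewrite -expr2 sqrtCK expr2 phi_sqr; ring. Qed.

Lemma ico_len_gt0 : 0 < ico_len.
Proof. by rewrite sqrtC_gt0 addr_gt0 ?ltr01 ?exprn_gt0 ?phi_gt0. Qed.

Lemma ico_len_real : ico_len \is Num.real.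
Proof. exact/ger0_real/ltW/ico_len_gt0. Qed.

Definition ico_vert (j : 'I_6) : 'cV[C]_3 :=
  match val j with
  | 0 => vec3 0 1 phi
  | 1 => vec3 0 1 (- phi)
  | 2 => vec3 1 phi 0
  | 3 => vec3 1 (- phi) 0
  | 4 => vec3 phi 0 1
  | _ => vec3 (- phi) 0 1
  end.

Lemma std_vertE j : std_vert C j = ico_len^-1 *: ico_vert j.
Proof. by []. Qed.

Lemma dotv_ico_vert_diag j : dotv (ico_vert j) (ico_vert j) = ico_len * ico_len.
Proof.
rewrite ico_len_sqr; have := phi_sqr.
by case: j => [[|[|[|[|[|[|//]]]]]] hj] pp; rewrite /ico_vert dotv_vec3 !mxE /=;
  rewrite /dot3; ring: pp.
Qed.

Lemma sqr_dotv_ico_vert_neq j1 j2 : j1 != j2 ->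
  dotv (ico_vert j1) (ico_vert j2) ^+ 2 = phi ^+ 2.
Proof.
have := phi_sqr.
by case: j1 => [[|[|[|[|[|[|//]]]]]] h1] pp;
  case: j2 => [[|[|[|[|[|[|//]]]]]] h2];
  rewrite // /ico_vert dotv_vec3 !mxE /= /dot3 => _; ring: pp.
Qed.

Lemma std_vert_unit j : dotv (std_vert C j) (std_vert C j) = 1.
Proof.
rewrite std_vertE dotvZl dotvZr dotv_ico_vert_diag mulrA -invfM mulVf //.
by rewrite mulf_neq0 // gt_eqF // ico_len_gt0.
Qed.

Lemma std_vert_sign_inj j1 j2 (s : bool) :
  std_vert C j1 = (-1) ^+ s *: std_vert C j2 -> j1 = j2.
Proof.
have Kn0 : ico_len^-1 != 0 by rewrite invr_eq0 gt_eqF // ico_len_gt0.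
rewrite !std_vertE scalerA mulrC -scalerA => /(scalerI Kn0) v12.
apply/eqP; apply: contraT => /sqr_dotv_ico_vert_neq.
rewrite v12 dotvZl exprMn sqrr_sign mul1r dotv_ico_vert_diag ico_len_sqr.
move/eqP; rewrite -subr_eq0.
have -> : (phi + 2%:R) ^+ 2 - phi ^+ 2 = 4%:R * (phi + 1) by ring.
by rewrite mulf_eq0 pnatr_eq0 (gt_eqF (addr_gt0 phi_gt0 ltr01)).
Qed.

Lemma big_ord6 (F : 'I_6 -> C) : \sum_(j < 6) F j =
  F (@Ordinal 6 0 isT) + F (@Ordinal 6 1 isT) + F (@Ordinal 6 2 isT)
  + F (@Ordinal 6 3 isT) + F (@Ordinal 6 4 isT) + F (@Ordinal 6 5 isT).
Proof.
rewrite !big_ord_recr big_ord0 /= add0r.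
by congr (_ + _ + _ + _ + _ + _); congr F; apply: val_inj.
Qed.

Lemma sum_abs_dotv_std_vert_le (u : 'cV[C]_3) :
  u \is a mxOver Num.real -> dotv u u <= 1 ->
  \sum_j `|dotv (std_vert C j) u| <= 2%:R * phi.
Proof.
move=> /mxOverP ur; rewrite dotvE -!expr2 => u1.
rewrite big_ord6 !std_vertE !dotvZl !normrM.
rewrite ger0_norm ?invr_ge0 ?(ltW ico_len_gt0) //.
rewrite -!mulrDr mulrC ler_pdivrMr ?ico_len_gt0 // /ico_vert /= !dotv_vec3.
pose p := RealSub phi_real; pose K := RealSub ico_len_real.
have pp : p * p = p + 1 by apply: val_inj; exact: phi_sqr.
have KK : K * K = p + 2%:R by apply: val_inj; exact: ico_len_sqr.
exact: (icosahedron_abs_dot_sum_le (a := RealSub (ur 0 0))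
  (b := RealSub (ur 1 0)) (c := RealSub (ur 2%:R 0)) pp phi_gt0 KK
  (ltW ico_len_gt0) u1).
Qed.

End Icosahedron.

Section IcosahedronAxes.
Variable C : numClosedFieldType.
Variable n : 'I_6 -> 'cV[C]_3.
Hypothesis ico : icosahedron_axes n.

Lemma icosahedron_axes_perm : exists Q : 'M[C]_3, real_orthogonal Q /\
  exists (g : 'I_6 -> 'I_6) (sg : 'I_6 -> bool), injective g /\
    forall j, n (g j) = (-1) ^+ sg j *: (Q *m std_vert C j).
Proof.
case: ico => Q [Qorth nQ]; exists Q; split => //.
have axis_of j :
    exists k (s : bool), n k = (-1) ^+ s *: (Q *m std_vert C j).
  have [|k [s e]] := (nQ (Q *m std_vert C j)).2.
    by exists j, false; rewrite expr0 scale1r.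
  by exists k, s; rewrite e signrZK.
have [g /fin_all_exists[sg gP]] := fin_all_exists axis_of.
exists g, sg; split=> // j1 j2 g12.
have := gP j1; rewrite g12 gP => e1.
have : Q *m std_vert C j1 = (-1) ^+ (sg j1 (+) sg j2) *: (Q *m std_vert C j2).
  by rewrite signr_addb -scalerA e1 signrZK.
move/(congr1 (mulmx Q^T)); case: Qorth => _ QQ.
by rewrite scalemxAr !mulmxA QQ !mul1mx; exact: std_vert_sign_inj.
Qed.

Lemma icosahedron_axis_unit k : dotv (n k) (n k) = 1.
Proof.
have [Q [[_ QQ] [g [sg [ginj gP]]]]] := icosahedron_axes_perm.
have [h _ hK] := injF_bij ginj; rewrite -[k]hK gP.
rewrite dotvZl dotvZr mulrA -expr2 sqrr_sign mul1r.
by rewrite dotv_orthogonal ?std_vert_unit.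
Qed.

Lemma icosahedron_sum_abs_dotv_le (r : 'cV[C]_3) :
  r \is a mxOver Num.real -> dotv r r <= 1 ->
  \sum_k `|dotv (n k) r| <= 2%:R * phi C.
Proof.
move=> rr r1; have [Q [[Qr QQ] [g [sg [ginj gP]]]]] := icosahedron_axes_perm.
rewrite (reindex_inj ginj) /=.
under eq_bigr => j _ do rewrite gP dotvZl normrM normr_sign mul1r dotv_mulmxl.
apply: sum_abs_dotv_std_vert_le.
  by rewrite mxOverM //; apply/mxOverP => i j; rewrite mxE.
by rewrite dotv_mulmxl trmxK mulmxA mulmx1C // mul1mx.
Qed.

End IcosahedronAxes.

Section Steering.
Variable C : numClosedFieldType.

Lemma werner_correlation eta (n : 'I_6 -> 'cV[C]_3) k : dotv (n k) (n k) = 1 ->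
  \tr (ndotsig (n k) *m (assemblage eta n k ord0 - assemblage eta n k ord_max))
  = - eta.
Proof.
rewrite dotvE -!expr2 => n1.
rewrite assemblage_werner_diff -scalemxAr mxtraceZ ndotsig_sqr n1 scale1r.
by rewrite mxtrace1; field.
Qed.

(* The steering inequality: its right-hand side is the largest value the
   functional takes on a single hidden state. *)
Lemma LHS_correlation_sum_le (sig : 'I_6 -> 'I_2 -> 'M[C]_2)
    (n : 'I_6 -> 'cV[C]_3) (B : C) :
  has_LHS sig ->
  (forall r, r \is a mxOver Num.real -> dotv r r <= 1 ->
     \sum_k `|dotv (n k) r| <= B) ->
  `|\sum_k \tr (ndotsig (n k) *m (sig k ord0 - sig k ord_max))| <= B.
Proof.
move=> [N [kappa [p [rho [kappa0 [kappa1 [p0 [p1 [rho_dens sigE]]]]]]]]] hB.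
set d := fun l k => p l k ord0 - p l k ord_max.
have d_le1 l k : `|d l k| <= 1.
  have := p1 l k; rewrite big_ord2 => <-.
  by rewrite (le_trans (ler_normB _ _)) // !ger0_norm ?p0.
under eq_bigr => k _ do rewrite !sigE -sumrB mulmx_sumr raddf_sum.
rewrite exchange_big /= (le_trans (ler_norm_sum _ _ _)) //.
have sumB : \sum_l kappa l * B = B by rewrite -mulr_suml kappa1 mul1r.
rewrite -[X in _ <= X]sumB; apply: ler_sum => l _.
have [r [rr r1 trE]] := density_bloch (rho_dens l).
rewrite (eq_bigr (fun k => kappa l * (d l k * dotv (n k) r))); last first.
  by move=> k _; rewrite -scalerBl -mulrBr -scalemxAr mxtraceZ trE mulrA.
rewrite -mulr_sumr normrM ger0_norm ?kappa0 // ler_wpM2l ?kappa0 //.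
apply: le_trans (ler_norm_sum _ _ _) (le_trans _ (hB r rr r1)).
by apply: ler_sum => k _; rewrite normrM ler_piMl.
Qed.

End Steering.

Theorem mainTheorem6 (C : numClosedFieldType) (eta : C)
  (n : 'I_6 -> 'cV[C]_3) :
  0 <= eta -> eta <= 1 ->
  icosahedron_axes n ->
  has_LHS (assemblage eta n) ->
  eta <= (3%:R + sqrtC 5%:R) / (3%:R * (1 + sqrtC 5%:R)).
Proof.
move=> eta0 _ ico lhs.
have := LHS_correlation_sum_le lhs (icosahedron_sum_abs_dotv_le ico).
under eq_bigr => k _ do rewrite werner_correlation ?icosahedron_axis_unit //.
rewrite sumr_const card_ord normrMn normrN ger0_norm // => eta6.
have -> : (3%:R + sqrtC 5%:R) / (3%:R * (1 + sqrtC 5%:R)) = 2%:R * phi C / 6%:R.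
  have s5 := sqrtCK (5%:R : C); rewrite /phi; field: s5.
  by rewrite gt_eqF // addr_gt0 ?ltr01 ?sqrtC_gt0 ?ltr0n.
by rewrite ler_pdivlMr ?ltr0n // mulr_natr.
Qed.
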